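(* Let $A$ be a nonempty finite set of $n$ alternatives and $\succ^w,\succ^o$ priority orderings on $A$. Each of the Walk-Open, Open-Walk, Rotating and Compromise choice rules (for $(\succ^w,\succ^o)$) satisfies capacity-filling, gross substitutes, and monotonicity. The Rotating choice rule satisfies the irrelevance of accepted alternatives and is (capacity-constrained) lexicographic, whereas the Walk-Open, Open-Walk and Compromise choice rules do not in general satisfy the irrelevance of accepted alternatives and are not in general (capacity-constrained) lexicographic (for each of them there exist $A$, $\succ^w$, $\succ^o$ for which it violates these).
   Context: Let $\mathcal{A}$ be the nonempty subsets of $A$. A choice rule assigns to each $(S,q)\in\mathcal{A}\times\{1,\dots,n\}$ a nonempty $C(S,q)\subseteq S$, $|C(S,q)|\le q$; $R(S,q)=S\setminus C(S,q)$. Given a list $(\succ_1,\dots,\succ_k)$ of priority orderings (strict linear orders on $A$), the lexicographic choice from $S$ chooses the $\succ_1$-highest element of $S$, then the $\succ_2$-highest among the remaining, etc., until $k$ are chosen or none is left. $C$ is (capacity-constrained) lexicographic if there is a profile $(\succ_1,\dots,\succ_n)$ such that $C(S,q)$ is the lexicographic choice from $S$ with $(\succ_1,\dots,\succ_q)$ for all $(S,q)$. The four rules are defined by taking, at capacity $q$, $C(S,q)$ to be the lexicographic choice from $S$ with the following list of length $q$ (w denotes $\succ^w$, o denotes $\succ^o$): Walk-Open: first $\lceil q/2\rceil$ entries w, remaining entries o. Open-Walk: first $\lceil q/2\rceil$ entries o, remaining entries w. Rotating: w, o, w, o, … (odd positions w, even positions o). Compromise: writing $q=4m+k$ with $k\in\{0,1,2,3\}$,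 the list consists of a block of w's, then a block of o's, then a block of w's, of lengths $(m,2m,m)$ if $k=0$, $(m+1,2m,m)$ if $k=1$, $(m+1,2m+1,m)$ if $k=2$, $(m+1,2m+1,m+1)$ if $k=3$. Capacity-filling: $|C(S,q)|=\min\{|S|,q\}$. Gross substitutes: for $a\neq b$ in $S$, $a\in C(S,q)\Rightarrow a\in C(S\setminus\{b\},q)$. Monotonicity: $C(S,q)\subseteq C(S,q+1)$ for $q\le n-1$. Irrelevance of accepted alternatives: for $S,S'\in\mathcal{A}$ and $q\le n-1$, $R(S,q)=R(S',q)$ implies $C(S,q+1)\cap R(S,q)=C(S',q+1)\cap R(S',q)$. *)

From mathcomp Require Import all_boot.
Set Implicit Arguments. Unset Strict Implicit. Unset Printing Implicit Defensive.

Section ChoiceRules.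
Variable A : finType.

(* A priority ordering: a strict linear order; [r x y] reads "x ≻ y". *)
Definition strict_linear (r : rel A) : Prop :=
  irreflexive r /\ transitive r /\ (forall x y, x != y -> r x y || r y x).

Definition top (r : rel A) (S : {set A}) : option A :=
  [pick x in S | [forall y in S, (y != x) ==> r x y]].

Fixpoint lexchoice (l : seq (rel A)) (S : {set A}) : {set A} :=
  if l is r :: l' then
    if top r S is Some a then a |: lexchoice l' (S :\ a) else set0
  else set0.

Definition capacity_filling (n : nat) (C : {set A} -> nat -> {set A}) : Prop :=
  forall S q, S != set0 -> 0 < q <= n -> #|C S q| = minn #|S| q.

Definition gross_substitutes (n : nat) (C : {set A} -> nat -> {set A}) : Prop :=
  forall S q a b, S != set0 -> 0 < q <= n -> a \in S -> b \in S -> a != b ->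
    a \in C S q -> a \in C (S :\ b) q.

Definition monotonicity (n : nat) (C : {set A} -> nat -> {set A}) : Prop :=
  forall S q, S != set0 -> 0 < q -> q <= n.-1 -> C S q \subset C S q.+1.

Definition irrelevance_accepted (n : nat) (C : {set A} -> nat -> {set A}) : Prop :=
  forall S S' q, S != set0 -> S' != set0 -> 0 < q -> q <= n.-1 ->
    S :\: C S q = S' :\: C S' q ->
    C S q.+1 :&: (S :\: C S q) = C S' q.+1 :&: (S' :\: C S' q).

Definition lexicographic (n : nat) (C : {set A} -> nat -> {set A}) : Prop :=
  exists P : seq (rel A),
    size P = n /\ (forall i, i < size P -> strict_linear (nth (fun _ _ => false) P i)) /\
    forall S q, S != set0 -> 0 < q <= n -> C S q = lexchoice (take q P) S.

Definition walk_open_list (w o : rel A) (q : nat) : seq (rel A) :=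
  nseq (uphalf q) w ++ nseq (q - uphalf q) o.

Definition open_walk_list (w o : rel A) (q : nat) : seq (rel A) :=
  nseq (uphalf q) o ++ nseq (q - uphalf q) w.

(* position i+1 (i.e. index i, 0-based) is w iff i+1 is odd *)
Definition rotating_list (w o : rel A) (q : nat) : seq (rel A) :=
  mkseq (fun i => if odd i then o else w) q.

Definition compromise_blocks (q : nat) : nat * nat * nat :=
  let m := q %/ 4 in
  match q %% 4 with
  | 0 => (m, 2 * m, m)
  | 1 => (m.+1, 2 * m, m)
  | 2 => (m.+1, (2 * m).+1, m)
  | _ => (m.+1, (2 * m).+1, m.+1)
  end.

Definition compromise_list (w o : rel A) (q : nat) : seq (rel A) :=
  let: (a, b, c) := compromise_blocks q in nseq a w ++ nseq b o ++ nseq c w.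

Definition rule_of (L : nat -> seq (rel A)) : {set A} -> nat -> {set A} :=
  fun S q => lexchoice (L q) S.

Definition walk_open (w o : rel A) := rule_of (walk_open_list w o).
Definition open_walk (w o : rel A) := rule_of (open_walk_list w o).
Definition rotating (w o : rel A) := rule_of (rotating_list w o).
Definition compromise (w o : rel A) := rule_of (compromise_list w o).

End ChoiceRules.

From mathcomp Require Import all_boot zify.
Set Implicit Arguments. Unset Strict Implicit. Unset Printing Implicit Defensive.

(* All four rules choose lexicographically along a list of q orderings, and
   the list at capacity q+1 arises from the list at capacity q by inserting a
   single ordering.  Lexicographic choice fills capacity; its rejected set
   grows with the available set, which gives gross substitutes; and inserting
   an ordering anywhere in the list only enlarges the chosen set, which gives
   monotonicity.  The rotating lists only ever grow at the end, so they are
   the prefixes of one profile and the rotating rule is lexicographic.  A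
   lexicographic rule satisfies irrelevance of accepted alternatives, since
   what it adds at capacity q+1 is the top of the rejected set for the
   (q+1)-st ordering.  The other rules insert in the middle of the list, and
   explicit examples on five and six alternatives violate irrelevance of
   accepted alternatives, hence also lexicographicity. *)

Section Lexchoice.
Variable A : finType.
Implicit Types (r : rel A) (S T : {set A}) (l : seq (rel A)).

Lemma strict_linear_antisym r : strict_linear r -> antisymmetric r.
Proof. by move=> [irr [tr _]] x y /andP[/tr h /h]; rewrite irr. Qed.

Lemma strict_linear_max r S : strict_linear r -> S != set0 ->
  exists2 x, x \in S & forall y, y \in S -> y != x -> r x y.
Proof.
move=> [irr [tr tot]] /set0Pn[x0 x0S].
pose beaten_by x := #|[set y in S | r y x]|.
case: (arg_minnP beaten_by x0S) => x xS xmin.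
exists x => // y yS nyx; apply: contraT => nrxy.
have ryx : r y x by move: (tot _ _ nyx); rewrite (negbTE nrxy) orbF.
have : beaten_by y < beaten_by x.
  apply/proper_card/properP; split.
    by apply/subsetP => z; rewrite !inE => /andP[-> /tr]; apply.
  by exists y; rewrite !inE ?yS ?ryx ?irr.
by rewrite ltnNge xmin.
Qed.

Lemma top_eq r S x : antisymmetric r -> x \in S ->
  (forall y, y \in S -> y != x -> r x y) -> top r S = Some x.
Proof.
move=> asym xS xmax; rewrite /top; case: pickP => [z /andP[zS /forallP zmax]|].
  case: (eqVneq z x) => [-> //|nzx]; congr Some; apply: asym.
  by rewrite xmax // andbT; move: (zmax x); rewrite xS eq_sym nzx.
move/(_ x); rewrite xS /=; move/negbT/forallPn => [y].
by rewrite negb_imply => /andP[yS]; rewrite negb_imply => /andP[/(xmax _ yS) ->].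
Qed.

Lemma top_spec r S x : top r S = Some x ->
  x \in S /\ forall y, y \in S -> y != x -> r x y.
Proof.
rewrite /top; case: pickP => [z /andP[zS /forallP zmax] [<-]|//].
by split=> // y yS nyz; move: (zmax y); rewrite yS nyz.
Qed.

Lemma top_None r S : strict_linear r -> top r S = None -> S = set0.
Proof.
move=> sl topS; apply: contraPeq topS => /(strict_linear_max sl)[x xS xmax].
by rewrite (top_eq (strict_linear_antisym sl) xS xmax).
Qed.

Fixpoint all_strict_linear l : Prop :=
  if l is r :: l' then strict_linear r /\ all_strict_linear l' else True.

Lemma all_strict_linear_cat l1 l2 :
  all_strict_linear (l1 ++ l2) <-> all_strict_linear l1 /\ all_strict_linear l2.
Proof. by elim: l1 => [|r l1 IH] /=; [tauto | rewrite IH; tauto]. Qed.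

Lemma all_strict_linear_nseq k r : strict_linear r -> all_strict_linear (nseq k r).
Proof. by move=> sl; elim: k => //= k ->. Qed.

Lemma all_strict_linear_mkseq (f : nat -> rel A) k :
  (forall i, strict_linear (f i)) -> all_strict_linear (mkseq f k).
Proof. by move=> sl; rewrite /mkseq; elim: (iota 0 k) => //= i s ->. Qed.

Lemma all_strict_linear_take P q :
  (forall i, i < size P -> strict_linear (nth (fun _ _ => false) P i)) ->
  all_strict_linear (take q P).
Proof.
elim: P q => [|r P IH] [|q] //= slP; split; first exact: (slP 0).
by apply: IH => i; apply: (slP i.+1).
Qed.

Lemma lexchoice_sub l S : lexchoice l S \subset S.
Proof.
elim: l S => [|r l IH] S /=; first exact: sub0set.
case topS: (top r S) => [a|]; last exact: sub0set.
rewrite subUset sub1set (top_spec topS).1.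
exact: subset_trans (IH _) (subD1set S a).
Qed.

Lemma lexchoice_cons_top r l S x :
  top r S = Some x -> lexchoice (r :: l) S = x |: lexchoice l (S :\ x).
Proof. by move=> /= ->. Qed.

Lemma lexchoice0 l : lexchoice l set0 = set0.
Proof. by apply/eqP; rewrite -subset0 lexchoice_sub. Qed.

Lemma card_lexchoice l S : all_strict_linear l -> #|lexchoice l S| = minn #|S| (size l).
Proof.
elim: l S => [|r l IH] S /= => [_|[sl sll]]; first by rewrite cards0 minn0.
case topS: (top r S) => [a|]; last by rewrite (top_None sl topS) cards0 min0n.
have aS := (top_spec topS).1.
have aN : a \notin lexchoice l (S :\ a).
  by apply: contraL (eqxx a) => /(subsetP (lexchoice_sub _ _)); rewrite !inE => /andP[].
by rewrite cardsU1 aN IH // (cardsD1 a S) aS add1n minnSS.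
Qed.

Lemma lexchoice_cat l1 l2 S : all_strict_linear l1 ->
  lexchoice (l1 ++ l2) S = lexchoice l1 S :|: lexchoice l2 (S :\: lexchoice l1 S).
Proof.
elim: l1 S => [|r l1 IH] S /= => [_|[sl sll]]; first by rewrite set0U setD0.
case topS: (top r S) => [a|]; last by rewrite (top_None sl topS) set0D lexchoice0 setU0.
by rewrite IH // -setDDl setUA.
Qed.

Lemma rejected_lexchoice_subset l S T : all_strict_linear l -> T \subset S ->
  T :\: lexchoice l T \subset S :\: lexchoice l S.
Proof.
elim: l S T => [|r l IH] S T /= => [_|[sl sll]] TS; first by rewrite !setD0.
case topT: (top r T) => [b|]; last by rewrite (top_None sl topT) set0D sub0set.
case topS: (top r S) => [a|].
  rewrite -!setDDl; apply: IH => //.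
  have [bT bmax] := top_spec topT; have [aS amax] := top_spec topS.
  apply/subsetP => x; rewrite !inE => /andP[nxb xT]; rewrite (subsetP TS) // andbT.
  (* the top of S, if it lies in T, is also the top of T *)
  apply: contraNneq nxb => xa; rewrite xa in xT *; apply/eqP.
  case: (eqVneq a b) => // nab; apply: (strict_linear_antisym sl).
  by rewrite bmax // amax ?(subsetP TS) // eq_sym.
by move: TS; rewrite (top_None sl topS) subset0 => /eqP ->; rewrite set0D sub0set.
Qed.

Lemma lexchoice_substitutes l S T a : all_strict_linear l -> T \subset S ->
  a \in T -> a \in lexchoice l S -> a \in lexchoice l T.
Proof.
move=> sll TS aT; apply: contraLR => aN.
have : a \in T :\: lexchoice l T by rewrite inE aN.
by move/(subsetP (rejected_lexchoice_subset sll TS)); rewrite inE => /andP[].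
Qed.

Lemma lexchoice_cons_sub r l S : strict_linear r -> all_strict_linear l ->
  lexchoice l S \subset lexchoice (r :: l) S.
Proof.
move=> sl sll /=; case topS: (top r S) => [a|]; last first.
  by rewrite (top_None sl topS) lexchoice0.
apply/subsetP => x xC; rewrite !inE; case: (eqVneq x a) => //= nxa.
apply: (lexchoice_substitutes sll (subD1set S a) _ xC).
by rewrite !inE nxa (subsetP (lexchoice_sub l S) _ xC).
Qed.

Lemma lexchoice_insert l1 r l2 S : all_strict_linear (l1 ++ r :: l2) ->
  lexchoice (l1 ++ l2) S \subset lexchoice (l1 ++ r :: l2) S.
Proof.
case/all_strict_linear_cat=> sl1 [sl sl2].
by rewrite !lexchoice_cat //; apply/setUS/lexchoice_cons_sub.
Qed.

Lemma lexchoice_rcons_rejected l r S : all_strict_linear l ->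
  lexchoice (rcons l r) S :&: (S :\: lexchoice l S) = lexchoice [:: r] (S :\: lexchoice l S).
Proof.
move=> sll; rewrite -cats1 lexchoice_cat // setIUl.
have -> : lexchoice l S :&: (S :\: lexchoice l S) = set0.
  by apply/setP => x; rewrite !inE; case: (x \in lexchoice l S).
by rewrite set0U; apply/setIidPl/lexchoice_sub.
Qed.

Lemma lexicographic_irrelevance_accepted n (C : {set A} -> nat -> {set A}) :
  lexicographic n C -> irrelevance_accepted n C.
Proof.
move=> [P [sizeP [slP CP]]] S S' q S0 S'0 q0 qn.
have qP : q < size P by rewrite sizeP; lia.
have [q_ok q1_ok] : 0 < q <= n /\ 0 < q.+1 <= n by lia.
have CqS X : X != set0 -> C X q.+1 :&: (X :\: C X q) =
    lexchoice [:: nth (fun _ _ => false) P q] (X :\: C X q).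
  move=> X0; rewrite !CP //.
  rewrite (take_nth (fun _ _ => false) qP) lexchoice_rcons_rejected //.
  exact: all_strict_linear_take.
by rewrite !CqS // => ->.
Qed.

End Lexchoice.

Section NestedProfiles.
Variable A : finType.
Implicit Types (l : seq (rel A)) (L : nat -> seq (rel A)).

Definition single_insertion l l' := exists l1 r l2, l = l1 ++ l2 /\ l' = l1 ++ r :: l2.

Record nested_profile L : Prop := NestedProfile {
  nested_strict_linear : forall q, all_strict_linear (L q);
  nested_nil : L 0 = [::];
  nested_insertion : forall q, single_insertion (L q) (L q.+1) }.

Lemma nested_profile_size L q : nested_profile L -> size (L q) = q.
Proof.
case=> _ L0 Lins; elim: q => [|q IHq]; first by rewrite L0.
have [l1 [r [l2 [Lq ->]]]] := Lins q.
by rewrite size_cat /= addnS -size_cat -Lq IHq.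
Qed.

Lemma nested_profile_eq L L' : L =1 L' -> nested_profile L -> nested_profile L'.
Proof. by move=> E [slL L0 Lins]; split=> [q||q]; rewrite -?E //. Qed.

Lemma nested_profile_properties L n : nested_profile L ->
  capacity_filling n (rule_of L) /\ gross_substitutes n (rule_of L) /\
  monotonicity n (rule_of L).
Proof.
move=> LP; have [slL _ Lins] := LP; split; [|split].
- by move=> S q _ _; rewrite /rule_of card_lexchoice // nested_profile_size.
- move=> S q a b _ _ aS _ nab; apply: lexchoice_substitutes => //; first exact: subD1set.
  by rewrite !inE nab.
- move=> S q _ _ _; rewrite /rule_of.
  have [l1 [r [l2 [Lq Lq1]]]] := Lins q.
  by rewrite Lq Lq1 lexchoice_insert // -Lq1.
Qed.

End NestedProfiles.

Definition block_succ (abc : nat * nat * nat) : seq (nat * nat * nat) :=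
  let: (a, b, c) := abc in [:: (a.+1, b, c); (a, b.+1, c); (a, b, c.+1)].

Lemma compromise_blocks_succ q :
  compromise_blocks q.+1 \in block_succ (compromise_blocks q).
Proof.
have [m [k [-> k4]]] : exists m k, q = m * 4 + k /\ k < 4.
  by exists (q %/ 4), (q %% 4); rewrite -divn_eq ltn_mod.
rewrite -addnS /compromise_blocks.
(* for k = 3 the capacity q+1 = (m+1)*4 starts a new period *)
case: k k4 => [|[|[|[|//]]]] _; last rewrite -mulSnr -[_ * 4]addn0.
all: by rewrite !modnMDl !divnMDl //= !divn_small // !inE !xpair_eqE; lia.
Qed.

Lemma walk_open_blocks_succ q :
  (uphalf q.+1, q.+1 - uphalf q.+1, 0) \in block_succ (uphalf q, q - uphalf q, 0).
Proof.
have uq : uphalf q <= q by rewrite leq_uphalf_double -addnn leq_addl.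
move: uq; rewrite /= !inE !xpair_eqE uphalf_half; case: (odd q) => /= uq; lia.
Qed.

Section BlockProfiles.
Variable A : finType.
Implicit Types (x y z : rel A).

Definition block_profile x y z (abc : nat * nat * nat) : seq (rel A) :=
  let: (a, b, c) := abc in nseq a x ++ nseq b y ++ nseq c z.

Lemma single_insertion_block_succ x y z abc abc' : abc' \in block_succ abc ->
  single_insertion (block_profile x y z abc) (block_profile x y z abc').
Proof.
case: abc => [[a b] c]; rewrite !inE => /or3P[] /eqP ->.
- by exists [::], x, (block_profile x y z (a, b, c)).
- by exists (nseq a x), y, (nseq b y ++ nseq c z).
- by exists (nseq a x ++ nseq b y), z, (nseq c z); rewrite /= !catA.
Qed.

Lemma block_profile_nested x y z (B : nat -> nat * nat * nat) :
  strict_linear x -> strict_linear y -> strict_linear z ->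
  B 0 = (0, 0, 0) -> (forall q, B q.+1 \in block_succ (B q)) ->
  nested_profile (fun q => block_profile x y z (B q)).
Proof.
move=> sx sy sz B0 Bsucc; split=> [q||q]; last exact: single_insertion_block_succ.
  case: (B q) => [[a b] c]; rewrite !all_strict_linear_cat.
  by split; [|split]; apply: all_strict_linear_nseq.
by rewrite B0.
Qed.

Variables w o : rel A.
Hypotheses (sw : strict_linear w) (so : strict_linear o).

Lemma walk_open_nested : nested_profile (walk_open_list w o).
Proof.
apply: (nested_profile_eq (L := fun q => block_profile w o o (uphalf q, q - uphalf q, 0))).
  by move=> q; rewrite /= cats0.
by apply: block_profile_nested => // q; apply: walk_open_blocks_succ.
Qed.

Lemma compromise_nested : nested_profile (compromise_list w o).
Proof. exact: block_profile_nested compromise_blocks_succ. Qed.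

Lemma rotating_nested : nested_profile (rotating_list w o).
Proof.
split=> // q; first by apply: all_strict_linear_mkseq => i; case: odd.
exists (rotating_list w o q), (if odd q then o else w), [::].
by rewrite cats0 /rotating_list mkseqS cats1.
Qed.

Lemma rotating_lexicographic : lexicographic #|A| (rotating w o).
Proof.
exists (rotating_list w o #|A|); split; first by rewrite size_mkseq.
split=> [i|S q _ /andP[_ qA]].
  by rewrite size_mkseq => iA; rewrite nth_mkseq //; case: odd.
by rewrite /rotating /rule_of /rotating_list /mkseq -map_take take_iota (minn_idPl qA).
Qed.

End BlockProfiles.

Lemma not_irrelevance_accepted_witness (A : finType) n (C : {set A} -> nat -> {set A}) S S' q :
  S != set0 -> S' != set0 -> 0 < q < n -> S :\: C S q = S' :\: C S' q ->
  C S q.+1 :&: (S :\: C S q) != C S' q.+1 :&: (S' :\: C S' q) ->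
  ~ irrelevance_accepted n C.
Proof.
move=> S0 S'0 /andP[q0 qn] RR + iaa; rewrite (iaa S S' q) ?eqxx //; lia.
Qed.

Definition priority n (s : seq nat) : rel 'I_n := fun x y => index (val x) s < index (val y) s.

Definition oset n (s : seq nat) : {set 'I_n} := [set x | val x \in s].

Arguments priority : clear implicits.
Arguments oset : clear implicits.

Lemma priority_antisym n s : antisymmetric (priority n s).
Proof. by move=> x y /andP[/ltn_trans h /h]; rewrite ltnn. Qed.

Lemma priority_strict_linear n s : all (mem s) (iota 0 n) -> strict_linear (priority n s).
Proof.
move=> /allP sn; split; [|split].
- by move=> x; rewrite /priority ltnn.
- by move=> x y z; apply: ltn_trans.
- move=> x y nxy; rewrite /priority; case: ltngtP => // idx.
  have inS (z : 'I_n) : val z \in s by apply: sn; rewrite mem_iota add0n ltn_ord.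
  by case/eqP: nxy; apply: val_inj; rewrite -(nth_index 0 (inS x)) idx nth_index.
Qed.

(* enumerates ['I_n] for n <= 6 *)
Ltac ord_cases := case=> [[|[|[|[|[|[|?]]]]]] ?] //.

Ltac by_ord_cases := let y := fresh "y" in move=> y; rewrite !inE; move: y; ord_cases.

Ltac top_step n k :=
  rewrite (@lexchoice_cons_top _ _ _ _ (@Ordinal n k isT));
  last by apply: top_eq; [exact: priority_antisym | rewrite !inE | by_ord_cases].

(* computes a lexicographic choice on ['I_n] by guessing each successive top *)
Ltac eval_lexchoice n :=
  rewrite /oset;
  repeat first [top_step n 0 | top_step n 1 | top_step n 2 | top_step n 3
               | top_step n 4 | top_step n 5];
  rewrite -[lexchoice [::] _]/set0; apply/setP; by_ord_cases.

Definition w5 := priority 5 [:: 0; 1; 2; 3; 4].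
Definition o5 := priority 5 [:: 0; 1; 3; 4; 2].

Lemma walk_open_counterexample : ~ irrelevance_accepted 5 (walk_open w5 o5).
Proof.
have C2S : lexchoice [:: w5; o5] (oset 5 [:: 0; 1; 2; 4]) = oset 5 [:: 0; 1].
  by eval_lexchoice 5.
have C2S' : lexchoice [:: w5; o5] (oset 5 [:: 0; 2; 3; 4]) = oset 5 [:: 0; 3].
  by eval_lexchoice 5.
have C3S : lexchoice [:: w5; w5; o5] (oset 5 [:: 0; 1; 2; 4]) = oset 5 [:: 0; 1; 4].
  by eval_lexchoice 5.
have C3S' : lexchoice [:: w5; w5; o5] (oset 5 [:: 0; 2; 3; 4]) = oset 5 [:: 0; 2; 3].
  by eval_lexchoice 5.
have L2 : walk_open_list w5 o5 2 = [:: w5; o5] by [].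
have L3 : walk_open_list w5 o5 3 = [:: w5; w5; o5] by [].
apply: (not_irrelevance_accepted_witness
  (S := oset 5 [:: 0; 1; 2; 4]) (S' := oset 5 [:: 0; 2; 3; 4]) (q := 2)).
- by apply/set0Pn; exists ord0; rewrite inE.
- by apply/set0Pn; exists ord0; rewrite inE.
- done.
- rewrite /walk_open /rule_of L2 C2S C2S'.
  by rewrite /oset; apply/setP; by_ord_cases.
- rewrite /walk_open /rule_of L2 L3 C2S C2S' C3S C3S'.
  by apply/eqP => /setP /(_ (@Ordinal 5 4 isT)); rewrite /oset !inE.
Qed.

Lemma open_walkE (A : finType) (w o : rel A) : open_walk w o = walk_open o w.
Proof. by []. Qed.

Definition w6 := priority 6 [:: 0; 1; 2; 3; 4; 5].
Definition o6 := priority 6 [:: 0; 1; 2; 5; 3; 4].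

Lemma compromise_counterexample : ~ irrelevance_accepted 6 (compromise w6 o6).
Proof.
have C3S : lexchoice [:: w6; o6; w6] (oset 6 [:: 0; 1; 2; 4; 5]) = oset 6 [:: 0; 1; 2].
  by eval_lexchoice 6.
have C3S' : lexchoice [:: w6; o6; w6] (oset 6 [:: 0; 1; 3; 4; 5]) = oset 6 [:: 0; 1; 3].
  by eval_lexchoice 6.
have C4S : lexchoice [:: w6; o6; o6; w6] (oset 6 [:: 0; 1; 2; 4; 5]) = oset 6 [:: 0; 1; 2; 4].
  by eval_lexchoice 6.
have C4S' : lexchoice [:: w6; o6; o6; w6] (oset 6 [:: 0; 1; 3; 4; 5]) = oset 6 [:: 0; 1; 3; 5].
  by eval_lexchoice 6.
have L3 : compromise_list w6 o6 3 = [:: w6; o6; w6] by [].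
have L4 : compromise_list w6 o6 4 = [:: w6; o6; o6; w6] by [].
apply: (not_irrelevance_accepted_witness
  (S := oset 6 [:: 0; 1; 2; 4; 5]) (S' := oset 6 [:: 0; 1; 3; 4; 5]) (q := 3)).
- by apply/set0Pn; exists ord0; rewrite inE.
- by apply/set0Pn; exists ord0; rewrite inE.
- done.
- rewrite /compromise /rule_of L3 C3S C3S'.
  by rewrite /oset; apply/setP; by_ord_cases.
- rewrite /compromise /rule_of L3 L4 C3S C3S' C4S C4S'.
  by apply/eqP => /setP /(_ (@Ordinal 6 4 isT)); rewrite /oset !inE.
Qed.

Theorem proposition6 :
  (forall (A : finType) (w o : rel A),
     0 < #|A| -> strict_linear w -> strict_linear o ->
     (forall C, (C = walk_open w o \/ C = open_walk w o \/ C = rotating w o \/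
                 C = compromise w o) ->
        capacity_filling #|A| C /\ gross_substitutes #|A| C /\ monotonicity #|A| C) /\
     irrelevance_accepted #|A| (rotating w o) /\ lexicographic #|A| (rotating w o))
  /\
  (exists (A : finType) (w o : rel A),
     [/\ 0 < #|A|, strict_linear w, strict_linear o,
         ~ irrelevance_accepted #|A| (walk_open w o) & ~ lexicographic #|A| (walk_open w o)])
  /\
  (exists (A : finType) (w o : rel A),
     [/\ 0 < #|A|, strict_linear w, strict_linear o,
         ~ irrelevance_accepted #|A| (open_walk w o) & ~ lexicographic #|A| (open_walk w o)])
  /\
  (exists (A : finType) (w o : rel A),
     [/\ 0 < #|A|, strict_linear w, strict_linear o,
         ~ irrelevance_accepted #|A| (compromise w o) & ~ lexicographic #|A| (compromise w o)]).
Proof.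
have [sw5 so5] : strict_linear w5 /\ strict_linear o5 by split; apply: priority_strict_linear.
have [sw6 so6] : strict_linear w6 /\ strict_linear o6 by split; apply: priority_strict_linear.
split; [|split; [|split]].
- move=> A w o _ sw so; split.
    move=> C [|[|[|]]] ->; apply: nested_profile_properties.
    + exact: walk_open_nested.
    + exact: walk_open_nested.
    + exact: rotating_nested.
    + exact: compromise_nested.
  have lexA := rotating_lexicographic sw so.
  by split=> //; apply: lexicographic_irrelevance_accepted.
- exists 'I_5, w5, o5; rewrite card_ord; split=> //; first exact: walk_open_counterexample.
  by move/lexicographic_irrelevance_accepted; apply: walk_open_counterexample.
- exists 'I_5, o5, w5; rewrite card_ord open_walkE.
  split=> //; first exact: walk_open_counterexample.
  by move/lexicographic_irrelevance_accepted; apply: walk_open_counterexample.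
- exists 'I_6, w6, o6; rewrite card_ord; split=> //; first exact: compromise_counterexample.
  by move/lexicographic_irrelevance_accepted; apply: compromise_counterexample.
Qed.
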